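(* Let $X$ be a shift space and $k\ge1$. The $k$-th higher block shift space $X^{(k)}$ is eventually dendric if and only if $X$ is eventually dendric.
   Context: $A$ is a finite alphabet; a shift space is a closed shift-invariant subset $X\subseteq A^{\mathbb Z}$ with language $\mathcal L(X)$ (finite factors), $\mathcal L_k(X)=\mathcal L(X)\cap A^k$. Given a bijection $f:\mathcal L_k(X)\to A_k$ onto a new alphabet $A_k$, the $k$-th higher block code $\gamma_k:X\to A_k^{\mathbb Z}$ is defined by $\gamma_k(x)_n=f(x_n\cdots x_{n+k-1})$ for all $n\in\mathbb Z$, and $X^{(k)}=\gamma_k(X)$ is the $k$-th higher block shift space. For a shift space $Y$ over alphabet $B$ and $w\in\mathcal L(Y)$, the extension graph $\mathcal E_1(w)$ is the undirected bipartite graph with vertex set the disjoint union of $\{a\in B: aw\in\mathcal L(Y)\}$ and $\{b\in B: wb\in\mathcal L(Y)\}$ and an edge $(a,b)$ iff $awb\in\mathcal L(Y)$. $Y$ is eventually dendric if for some $m\ge0$, $\mathcal E_1(w)$ is a tree for every $w\in\mathcal L(Y)$ of length $\ge m$. *)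

From Stdlib Require Import ZArith ClassicalEpsilon.
From mathcomp Require Import all_boot.
Set Implicit Arguments. Unset Strict Implicit. Unset Printing Implicit Defensive.

(* Classical boolean reflection of a proposition (to use fingraph's bool relations). *)
Definition pb (P : Prop) : bool :=
  if excluded_middle_informative P then true else false.

Definition shiftZ (A : Type) (x : Z -> A) : Z -> A := fun n => x (n + 1)%Z.
Definition ishiftZ (A : Type) (x : Z -> A) : Z -> A := fun n => x (n - 1)%Z.

(* Closedness in the product topology of A^Z (A discrete): a point all of whose
   central blocks x_[-n,n] are matched by points of X lies in X. *)
Definition closed_set (A : finType) (X : (Z -> A) -> Prop) : Prop :=
  forall x : Z -> A,
    (forall n : nat, exists y, X y /\
       forall i : Z, (Z.abs i <= Z.of_nat n)%Z -> y i = x i) -> X x.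

Definition shift_space (A : finType) (X : (Z -> A) -> Prop) : Prop :=
  closed_set X /\
  (forall x, X x -> X (shiftZ x)) /\ (forall x, X x -> X (ishiftZ x)).

Definition block (A : Type) (x : Z -> A) (n : Z) (k : nat) : seq A :=
  mkseq (fun i => x (n + Z.of_nat i)%Z) k.

Definition inL (A : finType) (X : (Z -> A) -> Prop) (w : seq A) : Prop :=
  exists x, X x /\ exists n : Z, w = block x n (size w).

Definition block_bijection (A B : finType) (X : (Z -> A) -> Prop) (k : nat)
    (f : seq A -> B) : Prop :=
  (forall w1 w2, inL X w1 -> size w1 = k -> inL X w2 -> size w2 = k ->
     f w1 = f w2 -> w1 = w2) /\
  (forall b : B, exists w, inL X w /\ size w = k /\ f w = b).

Definition higher_block_code (A B : Type) (f : seq A -> B) (k : nat)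
    (x : Z -> A) : Z -> B := fun n => f (block x n k).

Definition higher_block_shift (A B : finType) (X : (Z -> A) -> Prop) (k : nat)
    (f : seq A -> B) : (Z -> B) -> Prop :=
  fun y => exists x, X x /\ y = higher_block_code f k x.

(* Extension graph E_1(w): vertices inl a (left, a w in L) and inr b (right, w b in L),
   undirected edge between inl a and inr b iff a w b in L. *)
Definition ext_vertex (B : finType) (Y : (Z -> B) -> Prop) (w : seq B)
    (v : B + B) : bool :=
  match v with
  | inl a => pb (inL Y (a :: w))
  | inr b => pb (inL Y (rcons w b))
  end.

Definition ext_edge (B : finType) (Y : (Z -> B) -> Prop) (w : seq B) : rel (B + B) :=
  fun u v =>
    match u, v with
    | inl a, inr b => pb (inL Y (a :: rcons w b))
    | inr b, inl a => pb (inL Y (a :: rcons w b))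
    | _, _ => false
    end.

(* A (finite, simple, undirected) graph is a tree: nonempty, connected, and without
   cycles (a cycle = a closed walk through >= 3 pairwise distinct vertices). *)
Definition ext_is_tree (B : finType) (Y : (Z -> B) -> Prop) (w : seq B) : Prop :=
  (exists v, ext_vertex Y w v) /\
  (forall u v, ext_vertex Y w u -> ext_vertex Y w v -> connect (ext_edge Y w) u v) /\
  (forall c : seq (B + B), uniq c -> 2 < size c -> ~~ cycle (ext_edge Y w) c).

Definition eventually_dendric (B : finType) (Y : (Z -> B) -> Prop) : Prop :=
  exists m : nat, forall w : seq B, inL Y w -> m <= size w -> ext_is_tree Y w.

From Stdlib Require Import ZArith Lia ClassicalEpsilon.
From mathcomp Require Import all_boot zify.
Set Implicit Arguments. Unset Strict Implicit. Unset Printing Implicit Defensive.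

(* For k >= 1, the k-block code maps each word u of L(X) with |u| >= k to a word w of
   L(X^(k)) with |w| = |u| - k + 1; on words of a fixed length this is a bijection, since
   f is injective on L_k(X). It also identifies the extension graphs: c |-> f(first k
   letters of cu) and d |-> f(last k letters of ud) is a graph isomorphism from E_1(u)
   onto E_1(w). Hence long words are trees on one side iff on the other, and the
   dendricity thresholds differ by at most k. *)

Definition acyclic (T : finType) (e : rel T) : Prop :=
  forall c : seq T, uniq c -> 2 < size c -> ~~ cycle e c.

Definition tree_on (T : finType) (V : pred T) (e : rel T) : Prop :=
  (exists v, V v) /\ (forall u v, V u -> V v -> connect e u v) /\ acyclic e.

Lemma path_vertex (T : finType) (V : pred T) (e : rel T) :
  (forall x y, e x y -> V x && V y) -> forall a p, path e a p -> all V p.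
Proof.
move=> eV a p; elim: p a => //= x p IHp a /andP[exa pxp].
by case/andP: (eV _ _ exa) => _ ->; rewrite (IHp x).
Qed.

Lemma cycle_vertex (T : finType) (V : pred T) (e : rel T) :
  (forall x y, e x y -> V x && V y) -> forall c, cycle e c -> all V c.
Proof.
by move=> eV c cyc_c; apply/allP=> x xc; case/andP: (eV _ _ (next_cycle cyc_c xc)).
Qed.

Section GraphIsomorphism.

Variables (T1 T2 : finType) (V1 : pred T1) (V2 : pred T2).
Variables (e1 : rel T1) (e2 : rel T2) (phi : T1 -> T2).

Hypothesis phiV : forall x, V1 x -> V2 (phi x).
Hypothesis phi_onto : forall y, V2 y -> exists2 x, V1 x & phi x = y.
Hypothesis phi_inj : {in V1 &, injective phi}.
Hypothesis phi_edge : forall x y, V1 x -> V1 y -> e2 (phi x) (phi y) = e1 x y.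
Hypothesis e1V : forall x y, e1 x y -> V1 x && V1 y.
Hypothesis e2V : forall x y, e2 x y -> V2 x && V2 y.

Lemma path_iso a p : V1 a -> all V1 p -> path e2 (phi a) (map phi p) = path e1 a p.
Proof.
elim: p a => //= x p IHp a Va /andP[Vx Vp].
by rewrite phi_edge // IHp.
Qed.

Lemma cycle_iso c : all V1 c -> cycle e2 (map phi c) = cycle e1 c.
Proof.
case: c => //= x p /andP[Vx Vp].
by rewrite -map_rcons path_iso // all_rcons Vx.
Qed.

Lemma preim_seq p : all V2 p -> exists2 p', all V1 p' & map phi p' = p.
Proof.
elim: p => [|y p IHp] /=; first by exists [::].
case/andP=> /phi_onto[x Vx <-] /IHp[p' Vp' <-].
by exists (x :: p'); rewrite /= ?Vx.
Qed.

Lemma connect_iso x y : V1 x -> V1 y -> connect e2 (phi x) (phi y) = connect e1 x y.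
Proof.
move=> Vx Vy; apply/connectP/connectP => [[q pq lq] | [p pp ->]].
- have [p Vp def_q] := preim_seq (path_vertex e2V pq).
  move: pq lq; rewrite -def_q path_iso // last_map => pp lp.
  exists p => //; apply: phi_inj lp => //.
  by apply: (allP (_ : all V1 (x :: p))); rewrite ?mem_last //= Vx.
- by exists (map phi p); rewrite ?last_map // path_iso // (path_vertex e1V pp).
Qed.

Lemma acyclic_iso : acyclic e2 <-> acyclic e1.
Proof.
split=> acyc c uc sc; apply/negP => cyc_c.
- have Vc := cycle_vertex e1V cyc_c.
  have uc' : uniq (map phi c).
    by rewrite map_inj_in_uniq // => x y xc yc; apply: phi_inj; apply: (allP Vc).
  by have := acyc _ uc'; rewrite size_map cycle_iso // => /(_ sc)/negP.
- have [c' Vc' def_c] := preim_seq (cycle_vertex e2V cyc_c).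
  move: uc sc cyc_c; rewrite -def_c size_map cycle_iso // => /map_uniq uc' sc'.
  by move/negP: (acyc _ uc' sc').
Qed.

Lemma tree_on_iso : tree_on V2 e2 <-> tree_on V1 e1.
Proof.
rewrite /tree_on acyclic_iso; split=> -[[v Vv] [conn acyc]]; split=> //.
- by have [x Vx _] := phi_onto Vv; exists x.
- by split=> // x y Vx Vy; rewrite -connect_iso // conn ?phiV.
- by exists (phi v); apply: phiV.
- split=> // _ _ /phi_onto[x Vx <-] /phi_onto[y Vy <-].
  by rewrite connect_iso // conn.
Qed.

End GraphIsomorphism.

Lemma pbP (P : Prop) : reflect P (pb P).
Proof. by rewrite /pb; case: excluded_middle_informative => h; constructor. Qed.

Lemma pb_iff (P Q : Prop) : (P <-> Q) -> pb P = pb Q.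
Proof. by case=> PQ QP; apply/pbP/pbP. Qed.

Lemma size_block (T : Type) (x : Z -> T) n N : size (block x n N) = N.
Proof. exact: size_mkseq. Qed.

Lemma block_cons (T : Type) (x : Z -> T) n N :
  block x n N.+1 = x n :: block x (n + 1)%Z N.
Proof.
rewrite /block /mkseq -add1n iotaD /= Z.add_0_r (iotaDl 1 0) -map_comp.
by congr (_ :: _); apply: eq_map => i; rewrite /comp Nat2Z.inj_add; congr x; lia.
Qed.

Lemma block_cat (T : Type) (x : Z -> T) n a b :
  block x n (a + b) = block x n a ++ block x (n + Z.of_nat a)%Z b.
Proof.
elim: a n => [|a IHa] n; first by rewrite Z.add_0_r.
by rewrite addSn !block_cons IHa -cat_cons; congr (_ ++ block x _ b); lia.
Qed.

Section Factorial.

Variables (T : finType) (Y : (Z -> T) -> Prop).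

Lemma inL_cat s t : inL Y (s ++ t) -> inL Y s /\ inL Y t.
Proof.
case=> x [Yx [n]]; rewrite size_cat block_cat => /eqP.
rewrite eqseq_cat ?size_block // => /andP[/eqP def_s /eqP def_t].
by split; exists x; split=> //; [exists n | exists (n + Z.of_nat (size s))%Z].
Qed.

Lemma inL_take i s : inL Y s -> inL Y (take i s).
Proof. by rewrite -{1}(cat_take_drop i s) => /inL_cat[]. Qed.

Lemma inL_drop i s : inL Y s -> inL Y (drop i s).
Proof. by rewrite -{1}(cat_take_drop i s) => /inL_cat[]. Qed.

Lemma inL_behead c s : inL Y (c :: s) -> inL Y s.
Proof. by rewrite -cat1s => /inL_cat[]. Qed.

Lemma inL_belast c s : inL Y (rcons s c) -> inL Y s.
Proof. by rewrite -cats1 => /inL_cat[]. Qed.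

Lemma ext_edge_vertex w u v :
  ext_edge Y w u v -> ext_vertex Y w u && ext_vertex Y w v.
Proof.
have ends a b : inL Y (a :: rcons w b) -> inL Y (a :: w) /\ inL Y (rcons w b).
  move=> Law; split; last exact: inL_behead Law.
  by move: Law; rewrite -rcons_cons => /inL_belast.
by case: u v => a [] b //= /pbP/ends[/pbP-> /pbP->].
Qed.

End Factorial.

Lemma ext_is_treeE (T : finType) (Y : (Z -> T) -> Prop) w :
  ext_is_tree Y w = tree_on (ext_vertex Y w) (ext_edge Y w).
Proof. by []. Qed.

Section BlockCode.

Variables (A B : Type) (f : seq A -> B) (k : nat).
Hypothesis k_gt0 : 0 < k.

Fixpoint block_code (u : seq A) : seq B :=
  if u is c :: u' then
    if k <= size u then f (take k u) :: block_code u' else [::]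
  else [::].

Lemma block_code_small u : size u < k -> block_code u = [::].
Proof. by case: u => //= c u lt_u_k; rewrite leqNgt lt_u_k. Qed.

Lemma size_block_code u : size (block_code u) = (size u).+1 - k.
Proof.
elim: u => [|c u IHu] /=; first by case: k k_gt0.
case: ifP => le_k_u /=; last by apply/esym/eqP; rewrite subn_eq0 ltnNge le_k_u.
by rewrite IHu; case: k k_gt0 le_k_u => // k' _ le_k_u; rewrite !subSS subSn.
Qed.

Lemma block_code_cons c u :
  k <= (size u).+1 -> block_code (c :: u) = f (take k (c :: u)) :: block_code u.
Proof. by move=> /= ->. Qed.

Lemma block_code_rcons u d : k <= (size u).+1 ->
  block_code (rcons u d) =
  rcons (block_code u) (f (drop ((size u).+1 - k) (rcons u d))).
Proof.
elim: u => [|c u IHu] /= le_k_u; first by case: k k_gt0 le_k_u => // [[|]].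
rewrite size_rcons le_k_u; have [le_k_u'|lt_u_k] := leqP k (size u).+1.
  rewrite IHu // rcons_cons (subSn le_k_u'); congr (f _ :: _).
  by rewrite -rcons_cons -cats1 takel_cat.
rewrite block_code_small ?size_rcons //.
have -> : (size u).+2 - k = 0 by apply/eqP; rewrite subn_eq0.
by rewrite drop0 take_oversize //= size_rcons.
Qed.

Lemma block_code_cons_rcons c u d : k <= size u ->
  block_code (c :: rcons u d) =
  f (take k (c :: u)) :: rcons (block_code u) (f (drop ((size u).+1 - k) (rcons u d))).
Proof.
move=> le_k_u; rewrite block_code_cons ?size_rcons ?leqW ?block_code_rcons ?leqW //.
by congr (f _ :: _); rewrite -rcons_cons -cats1 takel_cat ?leqW.
Qed.

Lemma block_code_block (x : Z -> A) n N :
  block_code (block x n N) = block (higher_block_code f k x) n (N.+1 - k).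
Proof.
elim: N n => [|N IHN] n; first by case: k k_gt0.
rewrite block_cons /= size_block; case: ifP => le_k_N; last first.
  by have -> : N.+2 - k = 0 by apply/eqP; rewrite subn_eq0 ltnNge le_k_N.
rewrite IHN (subSn le_k_N) [in RHS]block_cons /higher_block_code -block_cons.
by rewrite -(subnKC le_k_N) block_cat take_size_cat ?size_block.
Qed.

End BlockCode.

Section HigherBlockLanguage.

Variables (A B : finType) (X : (Z -> A) -> Prop) (k : nat) (f : seq A -> B).
Hypothesis k_gt0 : 0 < k.
Hypothesis f_inj : forall w1 w2, inL X w1 -> size w1 = k -> inL X w2 -> size w2 = k ->
  f w1 = f w2 -> w1 = w2.

Local Notation Y := (higher_block_shift X k f).
Local Notation code := (block_code f k).

Lemma inL_block_code v : inL X v -> inL Y (code v).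
Proof.
case=> x [Xx [n ->]]; exists (higher_block_code f k x); split; first by exists x.
by exists n; rewrite block_code_block // size_block.
Qed.

Lemma inL_block_code_lift w :
  inL Y w -> exists2 v, inL X v & size v = size w + k.-1 /\ code v = w.
Proof.
case=> _ [[x [Xx ->]] [n def_w]].
exists (block x n (size w + k.-1)).
  by exists x; split=> //; exists n; rewrite size_block.
rewrite size_block block_code_block // def_w size_block; split=> //.
by congr block; case: k k_gt0 => // k' _; rewrite subSS addnK.
Qed.

Lemma block_code_inj u1 u2 : inL X u1 -> inL X u2 -> size u1 = size u2 -> k <= size u1 ->
  code u1 = code u2 -> u1 = u2.
Proof.
elim: u1 u2 => [|c1 u1 IHu] [|c2 u2] //= Lu1 Lu2 [eq_size] le_k_u.
rewrite -eq_size le_k_u => -[eq_f eq_code].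
have eq_take : take k (c1 :: u1) = take k (c2 :: u2).
  by apply: f_inj (inL_take _ Lu1) _ (inL_take _ Lu2) _ eq_f;
    rewrite size_takel //= -eq_size.
have [le_k_u1|lt_u1_k] := leqP k (size u1); last first.
  by move: eq_take; rewrite !take_oversize //= -eq_size.
move: eq_take; rewrite -(prednK k_gt0) => -[-> _]; congr (_ :: _).
exact: IHu (inL_behead Lu1) (inL_behead Lu2) eq_size le_k_u1 eq_code.
Qed.

Section ExtensionGraph.

Variable u : seq A.
Hypothesis Lu : inL X u.
Hypothesis le_k_u : k <= size u.

Local Notation w := (code u).
Local Notation lcode c := (f (take k (c :: u))).
Local Notation rcode d := (f (drop ((size u).+1 - k) (rcons u d))).

Definition ext_code (v : A + A) : B + B :=
  match v with inl c => inl (lcode c) | inr d => inr (rcode d) end.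

Lemma left_ext_code_onto b : inL Y (b :: w) -> exists2 c, inL X (c :: u) & lcode c = b.
Proof.
case/inL_block_code_lift=> -[|c v] Lcv [size_v]; first by move: size_v => /=; lia.
have eq_size : size v = size u.
  by move: size_v; rewrite /= (size_block_code _ k_gt0); lia.
rewrite block_code_cons ?eq_size ?leqW // => -[<- eq_code].
have le_k_v : k <= size v by rewrite eq_size.
have def_v := block_code_inj (inL_behead Lcv) Lu eq_size le_k_v eq_code.
by exists c; rewrite -def_v.
Qed.

Lemma right_ext_code_onto b :
  inL Y (rcons w b) -> exists2 d, inL X (rcons u d) & rcode d = b.
Proof.
case/inL_block_code_lift=> v Lv [size_v]; case/lastP: v Lv size_v => [|v d] Lvd size_v.
  by move: size_v; rewrite size_rcons /=; lia.
have eq_size : size v = size u.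
  by move: size_v; rewrite !size_rcons (size_block_code _ k_gt0); lia.
rewrite block_code_rcons ?eq_size ?leqW // => /eqP; rewrite eqseq_rcons.
case/andP=> /eqP eq_code /eqP <-.
have le_k_v : k <= size v by rewrite eq_size.
have def_v := block_code_inj (inL_belast Lvd) Lu eq_size le_k_v eq_code.
by exists d; rewrite -def_v.
Qed.

Lemma left_ext_code_inj c c' :
  inL X (c :: u) -> inL X (c' :: u) -> lcode c = lcode c' -> c = c'.
Proof.
move=> Lcu Lc'u eq_f.
have size_take e : size (take k (e :: u)) = k by rewrite size_takel ?leqW.
have := f_inj (inL_take _ Lcu) (size_take c) (inL_take _ Lc'u) (size_take c') eq_f.
by rewrite -(prednK k_gt0) => -[].
Qed.

Lemma right_ext_code_inj d d' :
  inL X (rcons u d) -> inL X (rcons u d') -> rcode d = rcode d' -> d = d'.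
Proof.
move=> Lud Lud' eq_f; have le_j_u : (size u).+1 - k <= size u.
  by rewrite -(prednK k_gt0) subSS leq_subr.
have size_drop_k e : size (drop ((size u).+1 - k) (rcons u e)) = k.
  by rewrite size_drop size_rcons subKn ?leqW.
have := f_inj (inL_drop _ Lud) (size_drop_k d) (inL_drop _ Lud') (size_drop_k d') eq_f.
by rewrite !drop_rcons // => /eqP; rewrite eqseq_rcons => /andP[_ /eqP].
Qed.

Lemma inL_biext_code c d : inL X (c :: u) -> inL X (rcons u d) ->
  inL Y (lcode c :: rcons w (rcode d)) <-> inL X (c :: rcons u d).
Proof.
move=> Lcu Lud; split; last by move/inL_block_code; rewrite block_code_cons_rcons.
case/inL_block_code_lift=> -[|c' v] Lv [size_v]; first by move: size_v => /=; lia.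
case/lastP: v Lv size_v => [|v d'] Lv size_v.
  by move: size_v; rewrite /= size_rcons; lia.
have eq_size : size v = size u.
  by move: size_v; rewrite /= !size_rcons (size_block_code _ k_gt0); lia.
rewrite block_code_cons_rcons ?eq_size // => -[eq_c /eqP].
rewrite eqseq_rcons => /andP[/eqP eq_code /eqP eq_d].
have Lvd : inL X (rcons v d') by apply: inL_behead Lv.
have le_k_v : k <= size v by rewrite eq_size.
have def_v := block_code_inj (inL_belast Lvd) Lu eq_size le_k_v eq_code; subst v.
have Lc'u : inL X (c' :: u) by move: Lv; rewrite -rcons_cons => /inL_belast.
by rewrite (left_ext_code_inj Lc'u Lcu eq_c) (right_ext_code_inj Lvd Lud eq_d) in Lv.
Qed.

Lemma ext_is_tree_block_code : ext_is_tree Y w <-> ext_is_tree X u.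
Proof.
rewrite !ext_is_treeE; apply: (tree_on_iso (phi := ext_code)); last 2 first.
- exact: ext_edge_vertex.
- exact: ext_edge_vertex.
- case=> [c|d] /pbP Lv; apply/pbP; move/inL_block_code: Lv.
    by rewrite block_code_cons // leqW.
  by rewrite block_code_rcons // leqW.
- case=> b /pbP; [case/left_ext_code_onto=> c Lc <-; exists (inl c)
                | case/right_ext_code_onto=> d Ld <-; exists (inr d)] => //; exact/pbP.
- case=> [c|d] [c'|d'] /pbP Lv /pbP Lv' //= [eq_f]; congr (_ _).
    exact: left_ext_code_inj.
  exact: right_ext_code_inj.
- case=> [c|d] [c'|d'] /pbP Lv /pbP Lv' //=; apply: pb_iff.
    exact: inL_biext_code.
  exact: inL_biext_code.
Qed.

End ExtensionGraph.

End HigherBlockLanguage.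

Theorem mainTheorem9 (A B : finType) (X : (Z -> A) -> Prop) (k : nat)
    (f : seq A -> B) :
  shift_space X -> 1 <= k -> block_bijection X k f ->
  (eventually_dendric (higher_block_shift X k f) <-> eventually_dendric X).
Proof.
move=> _ k_gt0 [f_inj _]; split=> -[m dendric].
- exists (m + k) => u Lu le_mk_u.
  have le_k_u : k <= size u by lia.
  apply/(ext_is_tree_block_code k_gt0 f_inj Lu le_k_u)/dendric.
    exact: inL_block_code.
  by rewrite size_block_code //; lia.
- exists m.+1 => w Lw le_m_w.
  have [v Lv [size_v <-]] := inL_block_code_lift k_gt0 Lw.
  have le_k_v : k <= size v by rewrite size_v; lia.
  by apply/(ext_is_tree_block_code k_gt0 f_inj Lv le_k_v)/dendric => //; rewrite size_v; lia.
Qed.
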